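(* Let $\mathcal{H}$ be a hypergraph on a finite vertex set $V$ and let $p\in[0,1]$. For every $\gamma\in(0,1/10]$, writing $\mu=\mu_p(\mathcal{H})$ and $\Delta=\Delta_p(\mathcal{H})$, \[ \Pr\big(\nu(\mathcal{H}[V_p])\le\gamma^2\mu\big)\le\exp\big(-(1-\gamma)\mu+2\Delta\big). \]
   Context: $V_p$ denotes the random subset of $V$ containing each element independently with probability $p$. For $W\subseteq V$, $\mathcal{H}[W]=\{A\in\mathcal{H}: A\subseteq W\}$. $\nu(\cdot)$ is the matching number. $\mu_p(\mathcal{H})=\sum_{A\in\mathcal{H}}p^{|A|}$ and $\Delta_p(\mathcal{H})=\sum p^{|A\cup B|}$, the sum over unordered pairs $\{A,B\}$ of distinct edges of $\mathcal{H}$ with $A\cap B\neq\emptyset$. *)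

From HB Require Import structures.
From mathcomp Require Import all_boot all_order all_algebra.
From mathcomp Require Import reals sequences exp.
Set Implicit Arguments. Unset Strict Implicit. Unset Printing Implicit Defensive.
Import Order.TTheory GRing.Theory Num.Theory.
Local Open Scope ring_scope.

(* Vertex set V is the finite type T; a hypergraph is a set of subsets of T. *)

Definition induced (T : finType) (H : {set {set T}}) (W : {set T}) : {set {set T}} :=
  [set A in H | A \subset W].

Definition is_matching (T : finType) (M : {set {set T}}) : bool :=
  [forall A in M, forall B in M, (A != B) ==> [disjoint A & B]].

Definition matching_number (T : finType) (H : {set {set T}}) : nat :=
  \max_(M : {set {set T}} | (M \subset H) && is_matching M) #|M|.

Definition mu_p (R : realType) (T : finType) (p : R) (H : {set {set T}}) : R :=
  \sum_(A in H) p ^+ #|A|.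

Definition Delta_p (R : realType) (T : finType) (p : R) (H : {set {set T}}) : R :=
  \sum_(S : {set {set T}} | [&& S \subset H, #|S| == 2%N &
                             \bigcap_(A in S) A != set0])
     p ^+ #|\bigcup_(A in S) A|.

(* Pr(W = V_p) for the p-random subset V_p of T *)
Definition prob_Vp (R : realType) (T : finType) (p : R) (W : {set T}) : R :=
  p ^+ #|W| * (1 - p) ^+ (#|T| - #|W|).

Definition Pr_Vp (R : realType) (T : finType) (p : R) (E : pred {set T}) : R :=
  \sum_(W : {set T} | E W) prob_Vp p W.

(* Call an edge light if the [p]-weights of the other edges meeting it sum to
   at most 2; the heavy edges carry [p]-mass at most [Delta_p].  If the light
   edges inside [V_p] have a maximum matching [M] with [#|M| <= s], then [V_p]
   contains the edges of [M] but no light edge disjoint from them.  By Harris'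
   inequality and Janson's inequality this has probability at most
   [prod_(A in M) e^3 p^|A| * exp (- mu(light) + Delta)], as the light edges
   meeting [M] have mass at most [3 #|M|].  Summing over all matchings with the
   weight [e^(a (s - #|M|))] gives [exp (a s + e^(3 - a) mu(light))], and
   [e^(3 - a) = gamma^2] yields the theorem. *)

From HB Require Import structures.
From mathcomp Require Import all_boot all_order all_algebra.
From mathcomp Require Import reals sequences exp.
From mathcomp Require Import ring lra.
Import Order.TTheory GRing.Theory Num.Theory.
Local Open Scope ring_scope.
Set Implicit Arguments. Unset Strict Implicit. Unset Printing Implicit Defensive.

Lemma setD1_notin (X : finType) (x : X) (W : {set X}) : x \notin W -> W :\ x = W.
Proof. by move=> xW; apply/setDidPl; rewrite disjoint_sym disjoints1. Qed.

Lemma sum_subsets_setU1 (V : nmodType) (X : finType) (x : X) (S : {set X})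
    (F : {set X} -> V) : x \notin S ->
  \sum_(W : {set X} | W \subset x |: S) F W =
  \sum_(W : {set X} | W \subset S) F W + \sum_(W : {set X} | W \subset S) F (x |: W).
Proof.
move=> xS; have xNsub (W : {set X}) : x \in W -> (W \subset S) = false.
  by move=> xW; apply: contraNF xS => /subsetP; apply.
rewrite (bigID (fun W : {set X} => x \notin W)) /=; congr (_ + _).
  apply: eq_bigl => W; rewrite -subDset; case: (boolP (x \in W)) => xW /=.
    by rewrite andbF xNsub.
  by rewrite andbT setD1_notin.
rewrite (reindex_onto (fun W => x |: W) (fun W => W :\ x)) /=; last first.
  by move=> W /andP[_]; rewrite negbK => xW; rewrite setD1K.
apply: eq_bigl => W; rewrite in_setU1 eqxx /= andbT -subDset.
case: (boolP (x \in W)) => xW; last by rewrite setU1K // eqxx andbT.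
rewrite [RHS]xNsub //; case: eqP => [/setP/(_ x)|]; last by rewrite andbF.
by rewrite !inE eqxx xW.
Qed.

Lemma sum_subsets_prod (V : comPzSemiRingType) (X : finType) (D : {set X})
    (y : X -> V) :
  \sum_(M : {set X} | M \subset D) \prod_(A in M) y A = \prod_(A in D) (1 + y A).
Proof.
suff sum_seq l : uniq l -> \sum_(M : {set X} | M \subset [set:: l]) \prod_(A in M) y A =
    \prod_(A <- l) (1 + y A).
  by have := sum_seq (enum D) (enum_uniq _); rewrite set_enum big_enum.
elim: l => [_|x l IH] /=.
  rewrite set_nil big_nil (big_pred1 set0) ?big_set0 // => M.
  by rewrite subset0.
case/andP=> xNl l_uniq; rewrite set_cons sum_subsets_setU1 ?inE // big_cons -IH //.
rewrite mulrDl mul1r mulr_sumr; congr (_ + _); apply: eq_bigr => M Ml.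
by rewrite big_setU1 //; apply: contra xNl => /(subsetP Ml); rewrite inE.
Qed.

Lemma sum_subsets_prod_le_expR (R : realType) (X : finType) (D : {set X}) (y : X -> R) :
  (forall A, 0 <= y A) ->
  \sum_(M : {set X} | M \subset D) \prod_(A in M) y A <= expR (\sum_(A in D) y A).
Proof.
move=> y_ge0; rewrite sum_subsets_prod expR_sum; apply: ler_prod => A _.
by rewrite addr_ge0 ?expR_ge1Dx.
Qed.

Section Matchings.
Variable T : finType.
Implicit Types (G M : {set {set T}}) (B : {set T}).

Lemma matching_trivIset M : is_matching M -> trivIset M.
Proof.
move=> /forallP M_match; apply/trivIsetP => A B AM BM.
by move/implyP: (M_match A) => /(_ AM) /forallP /(_ B) /implyP /(_ BM) /implyP.
Qed.

Lemma is_matching_setU1 M B :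
  is_matching M -> (forall A, A \in M -> [disjoint B & A]) -> is_matching (B |: M).
Proof.
move=> /forallP M_match B_disj; apply/forallP => A; apply/implyP => /setU1P A_in.
apply/forallP => C; apply/implyP => /setU1P C_in; apply/implyP => AC.
case: A_in C_in AC => [->|AM] [->|CM] AC.
- by rewrite eqxx in AC.
- exact: B_disj.
- by rewrite disjoint_sym B_disj.
- by move/implyP: (M_match A) => /(_ AM) /forallP /(_ C) /implyP /(_ CM) /implyP; apply.
Qed.

Lemma matching_number_ge G M :
  M \subset G -> is_matching M -> (#|M| <= matching_number G)%N.
Proof.
move=> MG M_match.
by apply: (@leq_bigmax_cond _ (fun M => (M \subset G) && is_matching M)); rewrite MG.
Qed.

Lemma matching_number_subset G G' :
  G \subset G' -> (matching_number G <= matching_number G')%N.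
Proof.
move=> GG'; apply/bigmax_leqP => M /andP[MG M_match].
exact: matching_number_ge (subset_trans MG GG') M_match.
Qed.

Lemma maximum_matching G : exists2 M : {set {set T}}, (M \subset G) && is_matching M &
  #|M| = matching_number G.
Proof.
have : (0 < #|[pred M : {set {set T}} | (M \subset G) && is_matching M]|)%N.
  apply/card_gt0P; exists set0; rewrite inE sub0set.
  by apply/forallP => A; rewrite inE.
by case/(eq_bigmax_cond (fun M => #|M|)) => M; exists M.
Qed.

Lemma maximum_matching_meets G M B :
  set0 \notin G -> M \subset G -> is_matching M -> #|M| = matching_number G ->
  B \in G -> ~~ [disjoint B & cover M].
Proof.
move=> G0 MG M_match M_max BG; apply/negP => B_disj.
have B_disjA A : A \in M -> [disjoint B & A].
  by move=> AM; apply: disjointWr B_disj; apply: bigcup_sup AM.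
have BNM : B \notin M.
  apply: contraNN G0 => BM; have := B_disjA B BM.
  by rewrite -setI_eq0 setIid => /eqP <-.
have BMG : B |: M \subset G by rewrite subUset sub1set BG MG.
have := matching_number_ge BMG (is_matching_setU1 M_match B_disjA).
by rewrite cardsU1 BNM -M_max ltnn.
Qed.

End Matchings.

Section RandomSubset.
Variables (R : realType) (T : finType) (p : R).
Hypotheses (p_ge0 : 0 <= p) (p_le1 : p <= 1).

Let q_ge0 : 0 <= 1 - p. Proof. by rewrite subr_ge0. Qed.

(* [expect s f C] is the expectation of [f (C :|: X)], where the random set [X]
   contains each vertex of [s] independently with probability [p]. *)
Fixpoint expect (s : seq T) (f : {set T} -> R) (C : {set T}) : R :=
  if s is x :: s' then p * expect s' f (x |: C) + (1 - p) * expect s' f C else f C.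

Lemma eq_expect s f g C : f =1 g -> expect s f C = expect s g C.
Proof. by move=> fg; elim: s C => [|x s IH] C /=; rewrite ?IH. Qed.

Lemma expect_cst s c C : expect s (fun=> c) C = c.
Proof. by elim: s C => [|x s IH] C //=; rewrite !IH; ring. Qed.

Lemma expectN s f C : expect s (fun W => - f W) C = - expect s f C.
Proof. by elim: s C => [|x s IH] C //=; rewrite !IH; ring. Qed.

Lemma expectB s f g C :
  expect s (fun W => f W - g W) C = expect s f C - expect s g C.
Proof. by elim: s C => [|x s IH] C //=; rewrite !IH; ring. Qed.

Lemma expect_sum s (I : Type) (r : seq I) (P : pred I) F C :
  expect s (fun W => \sum_(i <- r | P i) F i W) C =
  \sum_(i <- r | P i) expect s (F i) C.
Proof. by elim: s C => [|x s IH] C //=; rewrite !IH !mulr_sumr -big_split. Qed.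

Lemma ler_expect s f g C : (forall W, f W <= g W) -> expect s f C <= expect s g C.
Proof.
by move=> fg; elim: s C => [|x s IH] C /=; rewrite ?lerD ?ler_wpM2l.
Qed.

Lemma expect_ge0 s f C : (forall W, 0 <= f W) -> 0 <= expect s f C.
Proof. by move=> f_ge0; rewrite -(expect_cst s 0 C); apply: ler_expect. Qed.

Lemma expect_setU s f A C :
  expect s f (A :|: C) = expect s (fun W => f (A :|: W)) C.
Proof. by elim: s C => [|x s IH] C //=; rewrite -!IH setUCA. Qed.

Lemma expectE s f C : uniq s -> expect s f C =
  \sum_(W : {set T} | W \subset [set:: s])
     p ^+ #|W| * (1 - p) ^+ (size s - #|W|) * f (W :|: C).
Proof.
elim: s C => [|x s IH] C /=.
  move=> _; rewrite set_nil (big_pred1 set0) => [|W]; last by rewrite subset0.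
  by rewrite cards0 !mul1r set0U.
case/andP=> xNs s_uniq; rewrite set_cons sum_subsets_setU1 ?inE //.
rewrite !IH // addrC !mulr_sumr; congr (_ + _); apply: eq_bigr => W sW.
  have /subnSK <- : (#|W| < (size s).+1)%N.
    by rewrite ltnS (leq_trans (subset_leq_card sW)) // cardsE card_size.
  by rewrite exprS; ring.
have xNW : x \notin W by apply: contra xNs => /(subsetP sW); rewrite inE.
by rewrite cardsU1 xNW add1n subSS exprS -setUA setUCA; ring.
Qed.

Lemma Pr_VpE (E : pred {set T}) :
  Pr_Vp p E = expect (enum T) (fun W => (E W)%:R) set0.
Proof.
have setT_enum : [set:: enum T] = setT by apply/setP => y; rewrite !inE mem_enum.
rewrite expectE ?enum_uniq // setT_enum /Pr_Vp big_mkcond /=.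
apply: eq_big => [W|W _]; first by rewrite subsetT.
by rewrite setU0 /prob_Vp -cardE; case: (E W); rewrite ?mulr1 ?mulr0.
Qed.

Definition flip_mono (O : {set T}) (f : {set T} -> R) :=
  forall W x, if x \in O then f (x |: W) <= f W else f W <= f (x |: W).

Lemma flip_mono_expect s O f : flip_mono O f -> flip_mono O (expect s f).
Proof.
move=> f_mono; elim: s => [|y s IH] //= W x; rewrite setUCA.
by case: ifP (IH (y |: W) x) (IH W x) => _ le1 le2; rewrite lerD ?ler_wpM2l.
Qed.

(* Harris inequality.  Conditioning on the first vertex, the correlation grows
   by [p (1 - p)] times the product of the two increments, which have the same
   sign. *)
Lemma harris s O f g C : flip_mono O f -> flip_mono O g ->
  expect s f C * expect s g C <= expect s (fun W => f W * g W) C.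
Proof.
move=> f_mono g_mono; elim: s C => [|x s IH] C //=.
have := flip_mono_expect s f_mono C x; have := flip_mono_expect s g_mono C x.
have := IH (x |: C); have := IH C.
set F1 := expect s f (x |: C); set F0 := expect s f C.
set G1 := expect s g (x |: C); set G0 := expect s g C.
set FG1 := expect s _ (x |: C); set FG0 := expect s _ C.
move=> le0 le1 monoG monoF.
have incr_ge0 : 0 <= p * (1 - p) * ((F1 - F0) * (G1 - G0)).
  apply: mulr_ge0; first exact: mulr_ge0.
  by case: ifP monoF monoG => _ ? ?; [apply: mulr_le0|apply: mulr_ge0];
    rewrite ?subr_le0 ?subr_ge0.
have : p * (F1 * G1) + (1 - p) * (F0 * G0) <= p * FG1 + (1 - p) * FG0.
  by rewrite lerD ?ler_wpM2l.
have -> : (p * F1 + (1 - p) * F0) * (p * G1 + (1 - p) * G0) =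
  p * (F1 * G1) + (1 - p) * (F0 * G0) - p * (1 - p) * ((F1 - F0) * (G1 - G0)).
  by ring.
lra.
Qed.

Lemma harris_opp s O f g C : flip_mono O f -> flip_mono O (fun W => - g W) ->
  expect s (fun W => f W * g W) C <= expect s f C * expect s g C.
Proof.
move=> f_mono Ng_mono; have := harris s C f_mono Ng_mono.
rewrite expectN (@eq_expect _ (fun W => f W * - g W) (fun W => - (f W * g W)));
  last by move=> W; ring.
by rewrite expectN mulrN lerN2.
Qed.

Definition incl (S W : {set T}) : R := (S \subset W)%:R.

Lemma incl_ge0 (S W : {set T}) : 0 <= incl S W. Proof. by rewrite ler0n. Qed.

Lemma incl_le1 (S W : {set T}) : incl S W <= 1. Proof. by rewrite /incl lern1 leq_b1. Qed.

Lemma inclM (S S' W : {set T}) : incl S W * incl S' W = incl (S :|: S') W.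
Proof. by rewrite /incl subUset; case: (S \subset W); rewrite ?mul1r ?mul0r. Qed.

Lemma incl_setU1 (S W : {set T}) x : incl S W <= incl S (x |: W).
Proof.
rewrite /incl; have [SW|_] := boolP (S \subset W); last by rewrite ler0n.
by rewrite (subset_trans SW (subsetU1 _ _)).
Qed.

Lemma incl_setU1_notin (S W : {set T}) x : x \notin S -> incl S (x |: W) = incl S W.
Proof. by move=> xNS; rewrite /incl -subDset setD1_notin. Qed.

Lemma flip_mono_incl (O S : {set T}) : [disjoint O & S] -> flip_mono O (incl S).
Proof.
move=> OS W x; case: ifP => xO; last exact: incl_setU1.
by rewrite incl_setU1_notin // (disjointFr OS).
Qed.

Lemma expect_incl s (S : {set T}) : uniq s -> S \subset [set:: s] ->
  expect s (incl S) set0 = p ^+ #|S|.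
Proof.
elim: s S => [|x s IH] S /=.
  by move=> _; rewrite set_nil subset0 => /eqP ->; rewrite /incl sub0set cards0.
case/andP => xNs s_uniq; rewrite set_cons expect_setU.
case: (boolP (x \in S)) => xS sS; last first.
  have sS' : S \subset [set:: s] by rewrite -(setD1_notin xS) subDset.
  under eq_expect do rewrite incl_setU1_notin //.
  by rewrite IH //; ring.
have x0 : expect s (incl S) set0 = 0.
  rewrite expectE // big1 // => W sW; rewrite /incl setU0.
  suff -> : S \subset W = false by rewrite mulr0.
  by apply: contraNF xNs => /subsetP/(_ x xS)/(subsetP sW); rewrite inE.
under eq_expect do rewrite /incl -subDset -/(incl _ _).
by rewrite IH ?subDset // x0 (cardsD1 x S) xS exprS; ring.
Qed.

Local Notation E f := (expect (enum T) f set0).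

Lemma expect_incl_enum (S : {set T}) : E (incl S) = p ^+ #|S|.
Proof.
by rewrite expect_incl ?enum_uniq //; apply/subsetP => x _; rewrite inE mem_enum.
Qed.

Definition avoid (l : seq {set T}) (W : {set T}) : R := \prod_(c <- l) (1 - incl c W).

Fixpoint overlap (l : seq {set T}) : R :=
  if l is b :: l' then overlap l' + \sum_(c <- l' | c :&: b != set0) p ^+ #|b :|: c|
  else 0.

Lemma avoid_ge0_le1 l W : 0 <= avoid l W <= 1.
Proof.
apply: (big_ind (fun a => 0 <= a <= 1)) => [|a a' /andP[? ?] /andP[? ?]|c _].
- by rewrite ler01 lexx.
- by rewrite mulr_ge0 ?mulr_ile1.
- by rewrite subr_ge0 incl_le1 lerBlDr lerDl incl_ge0.
Qed.

Lemma avoid_ge0 l W : 0 <= avoid l W.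
Proof. by case/andP: (avoid_ge0_le1 l W). Qed.

Lemma avoid_le1 l W : avoid l W <= 1.
Proof. by case/andP: (avoid_ge0_le1 l W). Qed.

Lemma avoid_setU1 l W x : avoid l (x |: W) <= avoid l W.
Proof.
apply: ler_prod => c _.
by rewrite subr_ge0 incl_le1 lerD2l lerN2 incl_setU1.
Qed.

Lemma avoid_filterC (P : pred {set T}) l W :
  avoid l W = avoid [seq c <- l | P c] W * avoid [seq c <- l | ~~ P c] W.
Proof. by rewrite /avoid !big_filter (bigID P). Qed.

Lemma avoid_ge_union l W : 1 - \sum_(c <- l) incl c W <= avoid l W.
Proof.
elim: l => [|c l IH]; first by rewrite /avoid !big_nil subr0.
rewrite /avoid !big_cons -/(avoid l W).
have := incl_ge0 c W; have := incl_le1 c W; have := avoid_ge0_le1 l W.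
have : 0 <= \sum_(c <- l) incl c W by apply: sumr_ge0 => c' _; apply: incl_ge0.
nra.
Qed.

Lemma flip_mono_avoidN l : flip_mono set0 (fun W => - avoid l W).
Proof. by move=> W x; rewrite inE lerN2 avoid_setU1. Qed.

Lemma flip_mono_avoid (O : {set T}) (l : seq {set T}) :
  (forall c, c \in l -> c \subset O) -> flip_mono O (avoid l).
Proof.
move=> lO W x; case: ifP => xO; first exact: avoid_setU1.
suff -> : avoid l (x |: W) = avoid l W by [].
rewrite /avoid big_seq [RHS]big_seq; apply: eq_bigr => c cl.
by rewrite incl_setU1_notin //; apply: contraFN xO; apply/subsetP/lO.
Qed.

(* The deletion step: [F] below, the constraints disjoint from [b], is
   positively correlated with [b \subset W], while each of the remaining
   constraints costs at most [p ^+ #|b :|: c|]. *)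
Lemma expect_incl_avoid_ge (b : {set T}) l :
  (p ^+ #|b| - \sum_(c <- l | c :&: b != set0) p ^+ #|b :|: c|) * E (avoid l) <=
  E (fun W => incl b W * avoid l W).
Proof.
set S := \sum_(c <- l | _) _.
set F := avoid [seq c <- l | ~~ (c :&: b != set0)].
have EF_ge : E (avoid l) <= E F.
  apply: ler_expect => W; rewrite (avoid_filterC (fun c => c :&: b != set0)).
  by rewrite ler_piMl ?avoid_ge0 ?avoid_le1.
have F_mono : flip_mono (~: b) F.
  apply: flip_mono_avoid => c; rewrite mem_filter negbK => /andP[/eqP cb _].
  by rewrite -disjoints_subset -setI_eq0 cb.
have ptw W : incl b W * F W - \sum_(c <- l | c :&: b != set0) incl (b :|: c) W * F W <=
    incl b W * avoid l W.
  have Dge := avoid_ge_union [seq c <- l | c :&: b != set0] W.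
  rewrite big_filter in Dge.
  have -> : incl b W * avoid l W =
      incl b W * F W * avoid [seq c <- l | c :&: b != set0] W.
    by rewrite (avoid_filterC (fun c => c :&: b != set0)) /F; ring.
  apply: le_trans (ler_wpM2l (mulr_ge0 (incl_ge0 b W) (avoid_ge0 _ W)) Dge).
  rewrite mulrBr mulr1 mulr_sumr lerD2l lerN2.
  by apply: ler_sum => c _; rewrite -inclM mulrAC lexx.
have lower : E (fun W => incl b W * F W) -
    \sum_(c <- l | c :&: b != set0) E (fun W => incl (b :|: c) W * F W) <=
    E (fun W => incl b W * avoid l W).
  by rewrite -expect_sum -expectB; apply: ler_expect.
have pos_corr : p ^+ #|b| * E F <= E (fun W => incl b W * F W).
  rewrite -expect_incl_enum; apply: harris F_mono; apply: flip_mono_incl.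
  by rewrite -setI_eq0 setIC setICr.
have neg_corr c : E (fun W => incl (b :|: c) W * F W) <= p ^+ #|b :|: c| * E F.
  rewrite -expect_incl_enum; apply: (harris_opp _ _ _ (flip_mono_avoidN _)).
  by apply: flip_mono_incl; rewrite -setI_eq0 set0I.
have sum_neg : \sum_(c <- l | c :&: b != set0) E (fun W => incl (b :|: c) W * F W) <=
    S * E F by rewrite /S mulr_suml; apply: ler_sum => c _.
have avoid_ge0E : 0 <= E (avoid l) by apply: expect_ge0 => W; apply: avoid_ge0.
have [Sle|Sgt] := lerP 0 (p ^+ #|b| - S).
  apply: le_trans lower; apply: le_trans (ler_wpM2l Sle EF_ge) _; lra.
apply: le_trans (expect_ge0 _ _ _) => [|W]; first by rewrite nmulr_rle0.
by rewrite mulr_ge0 ?incl_ge0 ?avoid_ge0.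
Qed.

Lemma janson_step (b : {set T}) l :
  E (avoid (b :: l)) <=
  E (avoid l) * expR (- p ^+ #|b| + \sum_(c <- l | c :&: b != set0) p ^+ #|b :|: c|).
Proof.
have -> : E (avoid (b :: l)) = E (avoid l) - E (fun W => incl b W * avoid l W).
  by rewrite -expectB; apply: eq_expect => W; rewrite /avoid big_cons; ring.
have := expect_incl_avoid_ge b l; set S := \sum_(c <- l | _) _ => le_incl.
have : E (avoid l) * (1 + (- p ^+ #|b| + S)) <= E (avoid l) * expR (- p ^+ #|b| + S).
  by rewrite ler_wpM2l ?expR_ge1Dx //; apply: expect_ge0 => W; apply: avoid_ge0.
lra.
Qed.

Lemma janson l : E (avoid l) <= expR (- \sum_(c <- l) p ^+ #|c| + overlap l).
Proof.
elim: l => [|b l IH].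
  rewrite /= big_nil oppr0 addr0 expR0 (@eq_expect _ _ (fun=> 1)) ?expect_cst //.
  by move=> W; rewrite /avoid big_nil.
apply: le_trans (janson_step b l) _; rewrite big_cons /=.
set S := \sum_(c <- l | _) _.
have -> : - (p ^+ #|b| + \sum_(c <- l) p ^+ #|c|) + (overlap l + S) =
    (- \sum_(c <- l) p ^+ #|c| + overlap l) + (- p ^+ #|b| + S) by ring.
by rewrite [X in _ <= X]expRD ler_wpM2r ?expR_ge0.
Qed.

End RandomSubset.

Section OverlapPairs.
Variables (R : realType) (T : finType) (p : R).
Hypothesis p_ge0 : 0 <= p.

Definition Delta_ord (H : {set {set T}}) : R :=
  \sum_(A in H) \sum_(B in H | (B != A) && (B :&: A != set0)) p ^+ #|A :|: B|.

Lemma Delta_ordE (H : {set {set T}}) : Delta_ord H = 2 * Delta_p p H.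
Proof.
pose P2 (S : {set {set T}}) := [&& S \subset H, #|S| == 2 & \bigcap_(A in S) A != set0].
rewrite /Delta_ord pair_big_dep /=.
rewrite (partition_big (fun AB => [set AB.1; AB.2]) P2) /=; last first.
  case=> A B /= /andP[AH /and3P[BH BA BA0]].
  rewrite /P2 cards2 (eq_sym A) BA bigcap_setU !big_set1 setIC BA0 !andbT.
  by apply/subsetP => C /set2P[]->.
rewrite /Delta_p mulr_sumr; apply: eq_bigr => S /and3P[SH /cards2P[a [c [ac defS]]]].
move: SH; rewrite defS bigcap_setU bigcup_setU !big_set1 => /subsetP SH ac0.
rewrite (eq_bigl (mem [set (a, c); (c, a)])) => [|[A B]]; last first.
  rewrite !inE /= !xpair_eqE; apply/idP/idP.
    case/andP=> /and4P[_ _ BA _] /eqP eAB.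
    have : A \in [set a; c] by rewrite -eAB set21.
    have : B \in [set a; c] by rewrite -eAB set22.
    rewrite !inE => /orP[]/eqP eB /orP[]/eqP eA; subst A B;
      rewrite ?eqxx /= ?orbT //; by move: BA; rewrite eqxx.
  have [aH cH] := (SH a (set21 a c), SH c (set22 a c)).
  case/orP=> /andP[/eqP-> /eqP->]; rewrite aH cH ?(eq_sym c) ac ?(setIC c) ac0 ?eqxx //=.
  by rewrite setUC.
rewrite big_setU1 ?big_set1 /=; last by rewrite inE xpair_eqE negb_and ac.
by rewrite (setUC c a); ring.
Qed.

Lemma overlap_double (l : seq {set T}) : uniq l -> 2 * overlap p l =
  \sum_(a <- l) \sum_(c <- l | (c != a) && (c :&: a != set0)) p ^+ #|a :|: c|.
Proof.
elim: l => [|b l IH] /=; first by rewrite big_nil mulr0.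
case/andP => bNl l_uniq; set S := \sum_(c <- l | c :&: b != set0) _.
have neq_b c : c \in l -> c != b by move=> cl; apply: contraNneq bNl => <-.
have Sb : \sum_(c <- l | (c != b) && (c :&: b != set0)) p ^+ #|b :|: c| = S.
  rewrite big_seq_cond [RHS]big_seq_cond; apply: eq_bigl => c.
  by case: (boolP (c \in l)) => //= /neq_b ->.
have Sa : \sum_(a <- l) (if (b != a) && (b :&: a != set0) then p ^+ #|a :|: b| else 0) = S.
  rewrite /S [RHS]big_mkcond !big_seq; apply: eq_bigr => a al.
  by rewrite eq_sym neq_b // setIC setUC.
have ifD (P : bool) (x y : R) : (if P then x + y else y) = (if P then x else 0) + y.
  by case: P; rewrite ?add0r.
rewrite [RHS]big_cons [X in _ = X + _]big_cons eqxx /= Sb.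
under eq_bigr => a _ do rewrite big_cons ifD.
by rewrite big_split /= Sa -IH //; ring.
Qed.

Lemma overlap_enum (G : {set {set T}}) : 2 * overlap p (enum G) = Delta_ord G.
Proof.
rewrite overlap_double ?enum_uniq // big_enum /=; apply: eq_bigr => A _.
by rewrite big_enum_cond.
Qed.

Lemma Delta_p_subset (G H : {set {set T}}) : G \subset H -> Delta_p p G <= Delta_p p H.
Proof.
move=> GH; rewrite /Delta_p [X in X <= _]big_mkcond [X in _ <= X]big_mkcond /=.
apply: ler_sum => S _; case: ifP => [/and3P[SG -> ->]|_].
  by rewrite (subset_trans SG GH).
by case: ifP; rewrite ?exprn_ge0.
Qed.

Lemma overlap_le_Delta (G H : {set {set T}}) : G \subset H ->
  overlap p (enum G) <= Delta_p p H.
Proof.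
move=> GH; have := overlap_enum G; have := Delta_p_subset GH.
rewrite Delta_ordE; lra.
Qed.

End OverlapPairs.

Section LightEdges.
Variables (R : realType) (T : finType) (H : {set {set T}}) (p : R).
Hypotheses (p_ge0 : 0 <= p) (p_le1 : p <= 1) (H0 : set0 \notin H).
Implicit Types (M : {set {set T}}) (A B W : {set T}).

Local Notation incl := (@incl R T).
Local Notation avoid := (@avoid R T).

Definition nbr_weight (A : {set T}) : R :=
  \sum_(B in H | (B != A) && (B :&: A != set0)) p ^+ #|B|.

Definition light : {set {set T}} := [set A in H | nbr_weight A <= 2].

Lemma light_subset : light \subset H.
Proof. by apply/subsetP => A; rewrite inE => /andP[]. Qed.

Lemma sum_nbr_weight_le : \sum_(A in H) p ^+ #|A| * nbr_weight A <= Delta_ord p H.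
Proof.
apply: ler_sum => A _; rewrite mulr_sumr; apply: ler_sum => B _.
by rewrite -exprD ler_wiXn2l // cardsU leq_subr.
Qed.

(* Heavy edges have [p ^+ #|A| <= p ^+ #|A| * nbr_weight A / 2]. *)
Lemma mu_p_le_light : mu_p p H <= mu_p p light + Delta_p p H.
Proof.
rewrite /mu_p (bigID (fun A => nbr_weight A <= 2)) /=.
have -> : \sum_(A in H | nbr_weight A <= 2) p ^+ #|A| = \sum_(A in light) p ^+ #|A|.
  by apply: eq_bigl => A; rewrite inE.
rewrite lerD2l.
have heavy : \sum_(A in H | ~~ (nbr_weight A <= 2)) p ^+ #|A| <=
    \sum_(A in H) p ^+ #|A| * nbr_weight A / 2.
  rewrite (bigID (fun A => nbr_weight A <= 2) (mem H)) /= -[X in X <= _]add0r lerD //.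
    apply: sumr_ge0 => A _; rewrite divr_ge0 // mulr_ge0 ?exprn_ge0 //.
    by apply: sumr_ge0 => B _; apply: exprn_ge0.
  apply: ler_sum => A /andP[_]; rewrite -ltNge => w_gt2.
  by rewrite -mulrA ler_peMr ?exprn_ge0 // ler_pdivlMr //; lra.
rewrite -mulr_suml in heavy; have := sum_nbr_weight_le; rewrite Delta_ordE; lra.
Qed.

Definition free_of (M : {set {set T}}) : {set {set T}} :=
  [set B in light | [disjoint B & cover M]].

Lemma free_of_subset M : free_of M \subset H.
Proof.
by apply/subsetP => B; rewrite inE => /andP[/(subsetP light_subset)].
Qed.

Lemma weight_meeting_le A : A \in light ->
  \sum_(B in light | B :&: A != set0) p ^+ #|B| <= 3.
Proof.
move=> AL; have A_ne0 : A :&: A != set0.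
  by rewrite setIid; apply: contraNneq H0 => <-; apply: (subsetP light_subset).
rewrite (bigD1 A) /=; last by rewrite AL A_ne0.
have : nbr_weight A <= 2 by move: AL; rewrite inE => /andP[].
have := exprn_ile1 #|A| p_ge0 p_le1.
suff : \sum_(B : {set T} | (B \in light) && (B :&: A != set0) && (B != A)) p ^+ #|B| <=
    nbr_weight A by lra.
rewrite [X in _ <= X]big_mkcond [X in X <= _]big_mkcond /=; apply: ler_sum => B _.
case: ifP => [/andP[/andP[BL ->] ->]|_]; first by rewrite (subsetP light_subset).
by case: ifP; rewrite ?exprn_ge0.
Qed.

Lemma mu_p_light_le M : M \subset light ->
  mu_p p light <= mu_p p (free_of M) + 3 * #|M|%:R.
Proof.
move=> ML; rewrite /mu_p (bigID (fun B => [disjoint B & cover M])) /=.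
have -> : \sum_(B in light | [disjoint B & cover M]) p ^+ #|B| =
    \sum_(B in free_of M) p ^+ #|B| by apply: eq_bigl => B; rewrite [RHS]inE.
rewrite lerD2l.
pose f B A : R := if B :&: A != set0 then p ^+ #|B| else 0.
have f_ge0 B A : 0 <= f B A by rewrite /f; case: ifP; rewrite ?exprn_ge0.
apply: (@le_trans _ _ (\sum_(B in light) \sum_(A in M) f B A)).
  rewrite [X in X <= _]big_mkcondr /=; apply: ler_sum => B _.
  case: ifP => [B_meets|_]; last by apply: sumr_ge0.
  move: B_meets; rewrite -setI_eq0 => /set0Pn[x].
  rewrite inE => /andP[xB /bigcupP[A AM xA]].
  have BA : B :&: A != set0 by apply/set0Pn; exists x; rewrite inE xB.
  by rewrite (bigD1 A) //= {1}/f BA lerDl sumr_ge0.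
rewrite exchange_big mulr_natr -sumr_const; apply: ler_sum => A AM.
by rewrite /f -big_mkcondr; apply/weight_meeting_le/(subsetP ML).
Qed.

Definition small_matchings (s : R) : {set {set {set T}}} :=
  [set M : {set {set T}} | [&& M \subset light, is_matching M & #|M|%:R <= s]].

(* A maximum matching [M] of the light edges inside [W] witnesses the event:
   [M] lies in [W] and, being maximum, leaves no edge of [free_of M] in [W]. *)
Lemma matching_event_le (s : R) W :
  (nat_of_bool ((matching_number (induced H W))%:R <= s))%:R <=
  \sum_(M in small_matchings s) incl (cover M) W * avoid (enum (free_of M)) W.
Proof.
have term_ge0 M : 0 <= incl (cover M) W * avoid (enum (free_of M)) W.
  by rewrite mulr_ge0 ?incl_ge0 ?avoid_ge0.
have [small|_] := boolP (_ <= s); last by apply: sumr_ge0.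
have [M /andP[MG M_match] M_max] := maximum_matching (induced light W).
have ML : M \subset light.
  by apply: subset_trans MG _; apply/subsetP => A; rewrite inE => /andP[].
have M_small : M \in small_matchings s.
  rewrite inE ML M_match; apply: le_trans small; rewrite ler_nat M_max.
  apply: matching_number_subset; apply/subsetP => A; rewrite !inE.
  by case/andP=> /andP[-> _] ->.
have coverW : incl (cover M) W = 1.
  apply/eqP; rewrite pnatr_eq1 eqb1; apply/bigcupsP => A /(subsetP MG).
  by rewrite inE => /andP[].
have freeW : avoid (enum (free_of M)) W = 1.
  rewrite /avoid big_enum big1 // => B; rewrite inE => /andP[BL B_disj].
  suff -> : incl B W = 0 by rewrite subr0.
  apply/eqP; rewrite pnatr_eq0 eqb0; apply: contraTN B_disj => BW.
  apply: (maximum_matching_meets _ MG) => //; last by rewrite inE BL.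
  by apply: contra H0; rewrite !inE => /andP[/andP[]].
by rewrite (bigD1 M) //= coverW freeW mulr1 lerDl sumr_ge0.
Qed.

Lemma cover_matching_prod M : is_matching M ->
  p ^+ #|cover M| = \prod_(A in M) p ^+ #|A|.
Proof.
move/matching_trivIset/eqP <-.
exact: (big_morph _ (exprD p) (expr0 p)).
Qed.

Local Notation E f := (expect p (enum T) f set0).

Lemma expect_matching_term_le M : M \subset light -> is_matching M ->
  E (fun W => incl (cover M) W * avoid (enum (free_of M)) W) <=
  expR (- mu_p p light + Delta_p p H) * \prod_(A in M) (expR 3 * p ^+ #|A|).
Proof.
move=> ML M_match.
have incl_mono : flip_mono set0 (incl (cover M)).
  by apply: flip_mono_incl; rewrite -setI_eq0 set0I.
apply: le_trans (harris_opp p_ge0 p_le1 _ _ incl_mono (flip_mono_avoidN _ _)) _.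
rewrite expect_incl_enum // cover_matching_prod // big_split /= mulrC.
rewrite prodr_const -expRM_natl mulrA -expRD.
apply: ler_wpM2r; first by apply: prodr_ge0 => A _; apply: exprn_ge0.
apply: le_trans (janson p_ge0 p_le1 _) _; rewrite big_enum ler_expR /=.
have := overlap_le_Delta p_ge0 (free_of_subset M); have := mu_p_light_le ML.
rewrite /mu_p; lra.
Qed.

(* The parameter [a] trades the size constraint [#|M| <= s] for a geometric
   weight [expR (- a)] per matching edge. *)
Lemma Pr_small_matching_le (s a : R) : 0 <= a ->
  Pr_Vp p (fun W => (matching_number (induced H W))%:R <= s) <=
  expR (- mu_p p light + Delta_p p H + a * s + expR (3 - a) * mu_p p light).
Proof.
move=> a_ge0; set K := expR (- mu_p p light + Delta_p p H).
have y_ge0 A : 0 <= expR (3 - a) * p ^+ #|A| by rewrite mulr_ge0 ?expR_ge0 ?exprn_ge0.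
rewrite Pr_VpE; apply: le_trans (ler_expect p_ge0 p_le1 _ _ (matching_event_le s)) _.
rewrite expect_sum.
apply: (@le_trans _ _ (\sum_(M in small_matchings s)
    K * expR (a * s) * \prod_(A in M) (expR (3 - a) * p ^+ #|A|))).
  apply: ler_sum => M; rewrite inE => /and3P[ML M_match M_small].
  apply: le_trans (expect_matching_term_le ML M_match) _.
  rewrite -mulrA; apply: ler_wpM2l; first exact: expR_ge0.
  rewrite !big_split /= !prodr_const -!expRM_natl mulrA -expRD.
  apply: ler_wpM2r; first by apply: prodr_ge0 => A _; apply: exprn_ge0.
  by rewrite ler_expR; have := ler_wpM2l a_ge0 M_small; nra.
rewrite -mulr_sumr [X in _ <= X]expRD [X in _ <= X * _]expRD -/K.
apply: ler_wpM2l; first by rewrite mulr_ge0 ?expR_ge0.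
rewrite /mu_p mulr_sumr; apply: le_trans (sum_subsets_prod_le_expR light y_ge0).
rewrite [X in _ <= X]big_mkcond [X in X <= _]big_mkcond /=; apply: ler_sum => M _.
case: ifP => [|_]; first by rewrite inE => /and3P[-> _ _].
by case: ifP => _; rewrite ?prodr_ge0.
Qed.

End LightEdges.

Lemma ln10_le3 (R : realType) : ln (10 : R) <= 3.
Proof.
have half : (3 / 2 : R) <= expR (1 / 2) by have := expR_ge1Dx (1 / 2 : R); lra.
have : (3 / 2 : R) ^+ 6 <= expR 3.
  rewrite (_ : 3 = 6%:R * (1 / 2)); last by field.
  by rewrite expRM_natl lerXn2r ?nnegrE ?expR_ge0 //; lra.
rewrite (_ : (3 / 2 : R) ^+ 6 = 729 / 64); last by field.
move=> ge; rewrite -[X in _ <= X]expRK ler_ln ?posrE ?expR_gt0 //; lra.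
Qed.

Lemma mul_4_sub_2ln_le1 (R : realType) (g : R) : 0 < g -> g <= 1 / 10 ->
  g * (4 - 2 * ln g) <= 1.
Proof.
move=> g_gt0 g_le; have g10_gt0 : 0 < 10 * g by lra.
have ln_ge : - ln (10 * g) <= (10 * g)^-1 - 1.
  have := expR_ge1Dx (ln ((10 * g)^-1)).
  by rewrite lnK ?posrE ?invr_gt0 // lnV ?posrE //; lra.
rewrite lnM ?posrE // in ln_ge.
have lng : - ln g <= (10 * g)^-1 + 2 by have := ln10_le3 R; lra.
have := ler_wpM2l (ltW g_gt0) lng.
have -> : g * ((10 * g)^-1 + 2) = 1 / 10 + 2 * g by field; rewrite gt_eqF.
lra.
Qed.

Theorem mainTheorem3 (R : realType) (T : finType) (H : {set {set T}}) (p gamma : R)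
    (H_nonempty_edges : set0 \notin H)
    (hp0 : 0 <= p) (hp1 : p <= 1)
    (hg0 : 0 < gamma) (hg1 : gamma <= 1 / 10) :
  Pr_Vp p (fun W => (matching_number (induced H W))%:R <= gamma ^+ 2 * mu_p p H)
  <= expR (- (1 - gamma) * mu_p p H + 2 * Delta_p p H).
Proof.
set mu := mu_p p H; set D := Delta_p p H; set mul := mu_p p (light H p).
set a := 3 - 2 * ln gamma.
have a_ge0 : 0 <= a by rewrite /a; have := ln_le0 (_ : gamma <= 1); lra.
have exp3a : expR (3 - a) = gamma ^+ 2.
  by rewrite /a (_ : _ - _ = 2%:R * ln gamma) ?expRM_natl ?lnK ?posrE //; ring.
apply: le_trans (Pr_small_matching_le hp0 hp1 H_nonempty_edges _ a_ge0) _.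
rewrite exp3a ler_expR -/mu -/mul -/D.
have mu_ge0 : 0 <= mu by apply: sumr_ge0 => A _; apply: exprn_ge0.
have D_ge0 : 0 <= D.
  by rewrite /D; apply: sumr_ge0 => S _; apply: exprn_ge0.
have g2_le1 : gamma ^+ 2 <= 1 by rewrite expr_le1 //; lra.
have light_mass : (1 - gamma ^+ 2) * (mu - D) <= (1 - gamma ^+ 2) * mul.
  rewrite ler_wpM2l ?subr_ge0 //.
  by have := mu_p_le_light H hp0 hp1; rewrite -/mu -/mul -/D; lra.
have a_bound : gamma ^+ 2 * (1 + a) * mu <= gamma * mu.
  apply: (ler_wpM2r mu_ge0); rewrite expr2 -mulrA (_ : 1 + a = 4 - 2 * ln gamma).
    by rewrite -[X in _ <= X]mulr1; apply: (ler_wpM2l (ltW hg0)); apply: mul_4_sub_2ln_le1.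
  by rewrite /a; ring.
have := mulr_ge0 (exprn_ge0 2 (ltW hg0)) D_ge0.
lra.
Qed.
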